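(* Let $m,n\ge 1$ be integers and $\beta>0$. Let $U:\mathbb{R}^m\to\mathbb{R}$, let $\mathbf m:\mathbb{R}^m\to\mathbb{R}^{m\times m}$ take values in symmetric positive definite matrices, let $\mathbf H:\mathbb{R}^m\to\mathbb{R}^{m\times nm}$, and let $\boldsymbol\Gamma,\mathbf D:\mathbb{R}^m\to\mathbb{R}^{nm\times nm}$, all smooth. Define on $\widehat{\mathbf z}=(\mathbf q,\mathbf p,\boldsymbol\chi)\in\mathbb{R}^m\times\mathbb{R}^m\times\mathbb{R}^{nm}$ the extended free energy $$\widehat F(\mathbf q,\mathbf p,\boldsymbol\chi)=U(\mathbf q)+\tfrac12\mathbf p^\top\mathbf m(\mathbf q)^{-1}\mathbf p+\tfrac12\beta^{-1}\ln\det[\mathbf m(\mathbf q)]+\tfrac12\boldsymbol\chi^\top\boldsymbol\chi,$$ and consider the SDE $$\mathrm d\begin{pmatrix}\mathbf q\\ \mathbf p\\ \boldsymbol\chi\end{pmatrix}=\begin{pmatrix}0&\mathbf I&0\\ -\mathbf I&0&-\mathbf H(\mathbf q)\\ 0&\mathbf H(\mathbf q)^\top&\boldsymbol\Gamma(\mathbf q)\end{pmatrix}\nabla\widehat F(\mathbf q,\mathbf p,\boldsymbol\chi)\,\mathrm dt+\begin{pmatrix}0\\0\\ \mathbf D(\mathbf q)\,\mathrm d\mathbf W_t\end{pmatrix},$$ where $\mathbf W_t$ is a standard Brownian motion in $\mathbb{R}^{nm}$. If $\mathbf D(\mathbf q)\mathbf D(\mathbf q)^\top=-\beta^{-1}\big(\boldsymbol\Gamma(\mathbf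 q)+\boldsymbol\Gamma(\mathbf q)^\top\big)$ for all $\mathbf q$, then this SDE has the invariant distribution $$\rho_0(\mathbf q,\mathbf p,\boldsymbol\chi)\propto\frac{1}{(2\pi)^{m/2}\det[\mathbf m(\mathbf q)]^{1/2}}\exp\!\Big[-\beta\Big(U(\mathbf q)+\tfrac12\mathbf p^\top\mathbf m(\mathbf q)^{-1}\mathbf p+\tfrac12\boldsymbol\chi^\top\boldsymbol\chi\Big)\Big],$$ i.e. $\rho_0$ is a stationary solution of the associated Fokker–Planck equation.
   Context: This is a reduced (coarse-grained) model: $\mathbf q\in\mathbb{R}^m$ are coarse-grained coordinates, $\mathbf p$ their momenta, $\boldsymbol\chi=(\boldsymbol\chi_1;\dots;\boldsymbol\chi_n)$ with $\boldsymbol\chi_i\in\mathbb{R}^m$ auxiliary variables, $U$ a free energy, $\mathbf m(\mathbf q)$ a position-dependent mass matrix, and $\beta$ the inverse temperature. The density $\rho_0$ is assumed normalizable (e.g. $\int e^{-\beta U(\mathbf q)}\,\mathrm d\mathbf q<\infty$). Writing the SDE as $\mathrm d\widehat{\mathbf z}=\widehat{\mathbf J}(\mathbf q)\nabla\widehat F\,\mathrm dt+\widehat{\boldsymbol\Sigma}(\mathbf q)\,\mathrm d\mathbf W_t$, the Fokker–Planck equation is $\partial_t\rho=\nabla\cdot\big(-\widehat{\mathbf J}(\mathbf q)\nabla\widehat F\,\rho+\tfrac12\nabla\cdot(\widehat{\boldsymbol\Sigma}(\mathbf q)\widehat{\boldsymbol\Sigma}(\mathbf q)^\top\rho)\big)$.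 *)

From mathcomp Require Import all_boot all_order all_algebra all_classical all_reals all_analysis.
Import numFieldNormedType.Exports.
Set Implicit Arguments. Unset Strict Implicit. Unset Printing Implicit Defensive.
Import Order.TTheory GRing.Theory Num.Theory.
Local Open Scope ring_scope.

Fixpoint iter_deriv {R : realType} {V W : normedModType R}
    (vs : seq V) (f : V -> W) : V -> W :=
  match vs with
  | [::] => f
  | v :: vs' => fun x => derive (iter_deriv vs' f) x v
  end.

Definition smooth {R : realType} {V W : normedModType R} (f : V -> W) : Prop :=
  forall (vs : seq V) (x : V), differentiable (iter_deriv vs f) x.

Definition spd {R : realType} {k : nat} (A : 'M[R]_k) : Prop :=
  A^T = A /\ forall v : 'rV[R]_k, v != 0 -> 0 < (v *m A *m v^T) 0 0.

Definition qof {R : realType} {m n : nat} (z : 'rV[R]_(m + m + n * m)) : 'rV[R]_m :=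
  lsubmx (lsubmx z).
Definition pof {R : realType} {m n : nat} (z : 'rV[R]_(m + m + n * m)) : 'rV[R]_m :=
  rsubmx (lsubmx z).
Definition chiof {R : realType} {m n : nat} (z : 'rV[R]_(m + m + n * m)) : 'rV[R]_(n * m) :=
  rsubmx z.

Definition partial {R : realType} {N : nat} (i : 'I_N) (g : 'rV[R]_N -> R)
    (z : 'rV[R]_N) : R :=
  derive g z (delta_mx 0 i).

Definition grad {R : realType} {N : nat} (g : 'rV[R]_N -> R) (z : 'rV[R]_N) : 'cV[R]_N :=
  \col_i partial i g z.

Definition Fhat {R : realType} {m n : nat} (beta : R) (U : 'rV[R]_m -> R)
    (mm : 'rV[R]_m -> 'M[R]_m) (z : 'rV[R]_(m + m + n * m)) : R :=
  let q := qof z in let p := pof z in let chi := chiof z in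
  U q + 2^-1 * (p *m invmx (mm q) *m p^T) 0 0
      + 2^-1 * beta^-1 * ln (\det (mm q))
      + 2^-1 * (chi *m chi^T) 0 0.

Definition Jhat {R : realType} {m n : nat} (H : 'M[R]_(m, n * m))
    (Gam : 'M[R]_(n * m)) : 'M[R]_(m + m + n * m) :=
  block_mx (block_mx (0 : 'M[R]_m) 1%:M (- 1%:M) 0)
           (col_mx (0 : 'M[R]_(m, n * m)) (- H))
           (row_mx (0 : 'M[R]_(n * m, m)) H^T)
           Gam.

Definition Sighat {R : realType} {m n : nat} (D : 'M[R]_(n * m)) :
    'M[R]_(m + m + n * m, n * m) :=
  col_mx (0 : 'M[R]_(m + m, n * m)) D.

Definition drift {R : realType} {m n : nat} (beta : R) (U : 'rV[R]_m -> R)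
    (mm : 'rV[R]_m -> 'M[R]_m) (H : 'rV[R]_m -> 'M[R]_(m, n * m))
    (Gam : 'rV[R]_m -> 'M[R]_(n * m)) (z : 'rV[R]_(m + m + n * m))
    : 'cV[R]_(m + m + n * m) :=
  Jhat (H (qof z)) (Gam (qof z)) *m grad (@Fhat R m n beta U mm) z.

Definition FP_rhs {R : realType} {m n : nat} (beta : R) (U : 'rV[R]_m -> R)
    (mm : 'rV[R]_m -> 'M[R]_m) (H : 'rV[R]_m -> 'M[R]_(m, n * m))
    (Gam D : 'rV[R]_m -> 'M[R]_(n * m)) (rho : 'rV[R]_(m + m + n * m) -> R)
    (z : 'rV[R]_(m + m + n * m)) : R :=
  \sum_(i < m + m + n * m)
    partial i (fun y =>
      - (drift beta U mm H Gam y) i 0 * rho y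
      + 2^-1 * \sum_(j < m + m + n * m)
          partial j (fun y' =>
            (Sighat (D (qof y')) *m (Sighat (D (qof y')))^T) i j * rho y') y) z.

(* rho_0 up to the normalisation constant c *)
Definition rho0 {R : realType} {m n : nat} (c beta : R) (U : 'rV[R]_m -> R)
    (mm : 'rV[R]_m -> 'M[R]_m) (z : 'rV[R]_(m + m + n * m)) : R :=
  let q := qof z in let p := pof z in let chi := chiof z in
  c * ((Num.sqrt ((2 * pi) ^+ m) * Num.sqrt (\det (mm q)))^-1
       * expR (- beta * (U q + 2^-1 * (p *m invmx (mm q) *m p^T) 0 0
                             + 2^-1 * (chi *m chi^T) 0 0))).

(* [rho0] is a constant multiple of [expR (- beta * Fhat)], so [grad rho0 = - beta rho0 grad Fhat]
   and the probability flux [- Jhat grad Fhat rho0 + 1/2 div (Sighat Sighat^T rho0)] equals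
   [C grad rho0] with [C = beta^-1 Jhat + 1/2 Sighat Sighat^T]; this uses that
   [Sighat Sighat^T = diag (0, 0, D D^T)] only depends on [q], hence is constant in the directions
   in which it is differentiated.  The fluctuation-dissipation relation turns [C] into
   [beta^-1 Jhat] with [Gamma] replaced by its skew part, so [C] is skew-symmetric, and row [i] of
   [C] does not depend on the [i]-th coordinate.  The Fokker-Planck right-hand side is therefore
   [sum_ij C_ij d_i d_j rho0], which vanishes once [d_i d_j rho0 = d_j d_i rho0] whenever
   [C_ij <> 0].  Those pairs of directions are (q, p), (p, chi) and (chi_k, chi_l) with [k <> l];
   along each of them [Fhat] is a sum of products of a factor constant in one direction and a
   factor constant in the other, which yields the symmetry of the mixed partials from first
   derivatives of [U] and [m] alone. *)

From mathcomp Require Import all_boot all_order all_algebra all_classical all_reals all_analysis.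
From mathcomp.algebra_tactics Require Import ring.
Import numFieldNormedType.Exports.
Import Order.TTheory GRing.Theory Num.Theory.
Local Open Scope ring_scope.

Set Implicit Arguments. Unset Strict Implicit. Unset Printing Implicit Defensive.

Section DirectionalDerivatives.
Variables (R : realType) (V : normedModType R).
Implicit Types (f g : V -> R) (u v w x y : V).

Definition invariant_along (T : Type) w (f : V -> T) := forall x (t : R), f (t *: w + x) = f x.

Lemma invariant_along_comp (T T' : Type) w (f : V -> T) (g : T -> T') :
  invariant_along w f -> invariant_along w (g \o f).
Proof. by move=> fw x t /=; rewrite fw. Qed.

Lemma line_eq_growth_rate f g a v : (forall h : R, f (h *: v + a) = g (h *: v + a)) ->
  (fun h : R => h^-1 *: ((f \o shift a) (h *: v) - f a)) =
  (fun h : R => h^-1 *: ((g \o shift a) (h *: v) - g a)).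
Proof.
move=> fg; apply/funext => h /=.
by have := fg 0; rewrite scale0r add0r => ->; rewrite fg.
Qed.

Lemma derivable_line_eq f g a v : (forall h : R, f (h *: v + a) = g (h *: v + a)) ->
  derivable f a v <-> derivable g a v.
Proof. by move=> fg; rewrite /derivable (line_eq_growth_rate fg). Qed.

Lemma derive_line_eq f g a v : (forall h : R, f (h *: v + a) = g (h *: v + a)) ->
  'D_v f a = 'D_v g a.
Proof. by move=> fg; rewrite /derive (line_eq_growth_rate fg). Qed.

Lemma invariant_along_derive w u f : invariant_along w f -> invariant_along w ('D_u f).
Proof.
move=> fw x t; rewrite /derive.
suff -> : (fun h : R => h^-1 *: ((f \o shift (t *: w + x)) (h *: u) - f (t *: w + x))) =
          (fun h : R => h^-1 *: ((f \o shift x) (h *: u) - f x)) by [].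
by apply/funext => h /=; rewrite addrCA !fw.
Qed.

(* [f] need only be derivable where [g] does not vanish: the mixed partials of [rho0] are only
   controlled in the pairs of directions where the flux matrix does not vanish. *)
Lemma deriveMl_invariant_along g f y v : invariant_along v g ->
  (g y != 0 -> derivable f y v) ->
  derivable (fun x => g x * f x) y v /\ 'D_v (fun x => g x * f x) y = g y * 'D_v f y.
Proof.
move=> gv df; pose gf x := g x * f x; rewrite -/gf.
have [gy0 | /df dfy] := eqVneq (g y) 0.
  have line h : gf (h *: v + y) = cst 0 (h *: v + y) by rewrite /gf /= gv gy0 mul0r.
  rewrite gy0 mul0r (derive_line_eq line) derive_cst.
  by split; first exact/(derivable_line_eq line)/derivable_cst.
pose gyf x := g y * f x.
have line h : gf (h *: v + y) = gyf (h *: v + y) by rewrite /gf /gyf gv.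
rewrite (derive_line_eq line) (deriveMl _ dfy).
by split; first exact/(derivable_line_eq line)/(derivableM (derivable_cst (g y) y v) dfy).
Qed.

Lemma deriveMr_invariant_along g f y v : invariant_along v g ->
  (g y != 0 -> derivable f y v) ->
  derivable (fun x => f x * g x) y v /\ 'D_v (fun x => f x * g x) y = 'D_v f y * g y.
Proof.
move=> gv df; rewrite mulrC.
have -> : (fun x => f x * g x) = (fun x => g x * f x) by apply/funext => x; rewrite mulrC.
exact: deriveMl_invariant_along.
Qed.

Definition partials_commute u v f := forall y,
  [/\ derivable f y u, derivable f y v, derivable ('D_u f) y v,
      derivable ('D_v f) y u & 'D_v ('D_u f) y = 'D_u ('D_v f) y].

Lemma partials_commuteC u v f : partials_commute u v f -> partials_commute v u f.
Proof. by move=> fuv y; have [fu fv fuv' fvu E] := fuv y; split; last exact: esym. Qed.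

Lemma partials_commuteD u v f g : partials_commute u v f -> partials_commute u v g ->
  partials_commute u v (fun y => f y + g y).
Proof.
move=> fuv guv.
have [Du Dv] : 'D_u (fun y => f y + g y) = 'D_u f + 'D_u g /\
                'D_v (fun y => f y + g y) = 'D_v f + 'D_v g.
  split; apply/funext => y; have [? ? ? ? _] := fuv y; have [? ? ? ? _] := guv y;
  exact: deriveD.
move=> y; have [fu fv fuv' fvu Ef] := fuv y; have [gu gv guv' gvu Eg] := guv y.
rewrite Du Dv (deriveD fuv' guv') (deriveD fvu gvu) Ef Eg.
by split; [exact: derivableD fu gu | exact: derivableD fv gv |
           exact: derivableD fuv' guv' | exact: derivableD fvu gvu | by []].
Qed.

Lemma partials_commuteM u v f g : invariant_along v f -> invariant_along u g ->
  (forall y, derivable f y u) -> (forall y, derivable g y v) ->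
  partials_commute u v (fun y => f y * g y).
Proof.
move=> fv gu fu gv.
have Dv : 'D_v (fun y => f y * g y) = (fun y => f y * 'D_v g y).
  by apply/funext => y; have [] := deriveMl_invariant_along fv (fun=> gv y).
have Du : 'D_u (fun y => f y * g y) = (fun y => 'D_u f y * g y).
  by apply/funext => y; have [] := deriveMr_invariant_along gu (fun=> fu y).
move=> y; rewrite Du Dv.
have [dv _] := deriveMl_invariant_along fv (fun=> gv y).
have [du _] := deriveMr_invariant_along gu (fun=> fu y).
have [duv ->] := deriveMl_invariant_along (invariant_along_derive u fv) (fun=> gv y).
have [dvu ->] := deriveMr_invariant_along (invariant_along_derive v gu) (fun=> fu y).
by split; [exact: du | exact: dv | exact: duv | exact: dvu |].
Qed.

Lemma partials_commute_invariant u v f : invariant_along v f ->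
  (forall y, derivable f y u) -> partials_commute u v f.
Proof.
move=> fv fu; have -> : f = (fun y => f y * cst 1 y) by apply/funext => y; rewrite mulr1.
apply: partials_commuteM fv _ fu _ => [x t | y]; first by [].
exact: derivable_cst.
Qed.

Lemma partials_commute_sum (I : Type) (r : seq I) (P : pred I) u v (F : I -> V -> R) :
  (forall i, P i -> partials_commute u v (F i)) ->
  partials_commute u v (fun y => \sum_(i <- r | P i) F i y).
Proof.
move=> FP; rewrite -fct_sumE.
elim/big_ind: _ => [| f g fuv guv | i /FP //]; last exact: partials_commuteD fuv guv.
apply: partials_commute_invariant => [x t | y]; first reflexivity.
exact: derivable_cst.
Qed.

Lemma derive_expR_comp f y v : differentiable f y ->
  'D_v (fun x => expR (f x)) y = expR (f y) * 'D_v f y.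
Proof.
move=> df; have dexp : differentiable expR (f y) by apply/derivable1_diffP/derivable_expR.
rewrite deriveE; last exact: differentiable_comp.
rewrite diff_comp // deriveE //= -[X in 'd expR _ X]mulr1 linearZ /= -derive1E' //.
by rewrite derive1E derive_val mulrC.
Qed.

Section ScaledExponential.
Variables (c k : R) (f : V -> R).
Hypothesis df : forall y, differentiable f y.

Lemma differentiable_cexpR y : differentiable (fun x => c * expR (k * f x)) y.
Proof.
apply/differentiableZ/differentiable_comp; first exact/differentiableZ/df.
exact/derivable1_diffP/derivable_expR.
Qed.

Lemma derive_cexpR y v :
  'D_v (fun x => c * expR (k * f x)) y = k * (c * expR (k * f y)) * 'D_v f y.
Proof.
have dkf : differentiable (fun x => k * f x) y by exact/differentiableZ/df.
rewrite deriveMl; last exact/diff_derivable/differentiable_comp/derivable1_diffP/derivable_expR.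
by rewrite derive_expR_comp // deriveMl; [ring | exact: diff_derivable].
Qed.

Lemma partials_commute_cexpR u v :
  partials_commute u v f -> partials_commute u v (fun x => c * expR (k * f x)).
Proof.
set g := fun x => _; move=> fuv y; have [fu fv fuv' fvu E] := fuv y.
have Dgx x w : 'D_w g x = k * g x * 'D_w f x by exact: derive_cexpR.
have Dg w : 'D_w g = fun x => k * g x * 'D_w f x by apply/funext => x; exact: Dgx.
have dg x w : derivable g x w by exact/diff_derivable/differentiable_cexpR.
have dkg w : derivable (fun x => k * g x) y w by exact: derivableM (derivable_cst _ _ _) (dg y w).
rewrite !Dg; split; [exact: dg | exact: dg | exact: derivableM (dkg v) fuv' |
                     exact: derivableM (dkg u) fvu |].
rewrite (deriveM (dkg v) fuv') (deriveM (dkg u) fvu).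
rewrite (deriveMl _ (dg y v)) (deriveMl _ (dg y u)) !Dgx E /GRing.scale /=; ring.
Qed.

End ScaledExponential.

End DirectionalDerivatives.

Section MatrixValuedFunctions.
Variables (R : realType) (V : normedModType R).

Lemma differentiable_sumr (I : Type) (r : seq I) (P : pred I) (F : I -> V -> R) x :
  (forall i, P i -> differentiable (F i) x) ->
  differentiable (fun y => \sum_(i <- r | P i) F i y) x.
Proof.
move=> dF; rewrite -fct_sumE.
elim/big_ind: _ => [| f g df dg | i /dF //]; last exact: differentiableD df dg.
exact: differentiable_cst.
Qed.

Lemma differentiable_prodr (I : Type) (r : seq I) (P : pred I) (F : I -> V -> R) x :
  (forall i, P i -> differentiable (F i) x) ->
  differentiable (fun y => \prod_(i <- r | P i) F i y) x.
Proof.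
move=> dF; rewrite -fct_prodE.
elim/big_ind: _ => [| f g df dg | i /dF //]; last exact: differentiableM df dg.
exact: differentiable_cst.
Qed.

Lemma differentiable_mx_entry a b (A : V -> 'M[R]_(a, b)) x i j :
  differentiable A x -> differentiable (fun y => A y i j) x.
Proof. by move=> dA; exact: differentiable_comp dA (differentiable_coord (A x) i j). Qed.

Lemma differentiable_det k (A : V -> 'M[R]_k) x :
  (forall i j, differentiable (fun y => A y i j) x) ->
  differentiable (fun y => \det (A y)) x.
Proof.
move=> dA; apply: differentiable_sumr => s _.
by apply/differentiableZ/differentiable_prodr => i _; exact: dA.
Qed.

Lemma differentiable_invmx_entry k (A : V -> 'M[R]_k) x i j :
  (forall y, A y \in unitmx) -> differentiable A x ->
  differentiable (fun y => invmx (A y) i j) x.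
Proof.
move=> uA dA; have -> : (fun y => invmx (A y) i j) =
    (fun y => (\det (A y))^-1 * cofactor (A y) j i).
  by apply/funext => y; rewrite /invmx uA !mxE.
apply: differentiableM.
  apply: differentiableV; last by rewrite -unitfE -unitmxE.
  by apply: differentiable_det => ? ?; exact: differentiable_mx_entry.
case: k A uA dA i j => [|k] A uA dA i j; first by case: i.
apply/differentiableZ/differentiable_det => a b; under eq_fun do rewrite !mxE.
exact: differentiable_mx_entry dA.
Qed.

End MatrixValuedFunctions.

Section PositiveDefinite.
Variables (R : realType) (k : nat).
Implicit Types (A : 'M[R]_k) (v : 'rV[R]_k).

Definition posdef A := forall v, v != 0 -> 0 < (v *m A *m v^T) 0 0.

Lemma posdef1 : posdef 1%:M.
Proof.
move=> v vN0; rewrite mulmx1 mxE.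
have [i vi] : exists i, v 0 i != 0.
  apply/existsP; apply: contraNT vN0 => /existsPn v0; apply/eqP/matrixP => a b.
  by rewrite ord1 mxE; apply/eqP/negbNE/v0.
rewrite (bigD1 i) //= mxE ltr_pwDl //; first by rewrite lt_def sqrf_eq0 vi /= -expr2 sqr_ge0.
by apply: sumr_ge0 => j _; rewrite mxE -expr2 sqr_ge0.
Qed.

Lemma posdef_det_neq0 A : posdef A -> \det A != 0.
Proof.
by move=> pdA; apply/negP => /det0P [v vN0 vA]; have := pdA v vN0; rewrite vA mul0mx mxE ltxx.
Qed.

Lemma posdef_convex A B (t : R) : posdef A -> posdef B -> 0 <= t <= 1 ->
  posdef ((1 - t) *: A + t *: B).
Proof.
move=> pdA pdB /andP[t0 t1] v vN0.
rewrite mulmxDr mulmxDl -!scalemxAr -!scalemxAl.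
have -> : ((1 - t) *: (v *m A *m v^T) + t *: (v *m B *m v^T)) 0 0 =
    (1 - t) * (v *m A *m v^T) 0 0 + t * (v *m B *m v^T) 0 0 by rewrite !mxE.
have [-> | tN0] := eqVneq t 0; first by rewrite subr0 mul1r mul0r addr0 pdA.
by rewrite ltr_wpDl ?mulr_gt0 ?mulr_ge0 ?subr_ge0 ?pdB ?(ltW (pdA _ _)) // lt_def tN0.
Qed.

(* [\det] does not vanish on the segment of positive definite matrices from [1%:M] to [A]. *)
Lemma posdef_det_gt0 A : posdef A -> 0 < \det A.
Proof.
move=> pdA; pose f (t : R) := \det ((1 - t) *: 1%:M + t *: A).
have cf : continuous f.
  move=> t; apply/differentiable_continuous/differentiable_det => i j.
  under eq_fun do rewrite !mxE.
  by apply: differentiableD; apply: differentiableM => //; apply: differentiableB.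
have f0 : f 0 = 1 by rewrite /f subr0 scale1r scale0r addr0 det1.
have f1 : f 1 = \det A by rewrite /f subrr scale0r scale1r add0r.
rewrite lt_def posdef_det_neq0 //= leNgt; apply/negP => A_lt0.
have [c c01 fc0] : exists2 c, c \in `[0, 1] & f c = 0.
  apply: IVT => //; first exact: continuous_subspaceT.
  by rewrite f0 f1 ge_min le_max ler01 (ltW A_lt0) orbT.
move: c01; rewrite in_itv /= => c01.
by have := posdef_det_neq0 (posdef_convex posdef1 pdA c01); rewrite -/(f c) fc0 eqxx.
Qed.

End PositiveDefinite.

Lemma sum_skew_sym_eq0 (R : numDomainType) (N : nat) (C h : 'I_N -> 'I_N -> R) :
  (forall i j, C j i = - C i j) -> (forall i j, C i j != 0 -> h i j = h j i) ->
  \sum_i \sum_j C i j * h i j = 0.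
Proof.
move=> Cskew hsym; set S := \sum_i _.
have SN : S = - S.
  rewrite {1}/S exchange_big -sumrN; apply: eq_bigr => i _; rewrite -sumrN.
  apply: eq_bigr => j _; rewrite Cskew.
  by have [-> | /hsym ->] := eqVneq (C i j) 0; rewrite ?oppr0 ?mul0r ?oppr0 // mulNr.
have : S *+ 2 == 0 by rewrite mulr2n {2}SN subrr.
by rewrite mulrn_eq0 => /eqP.
Qed.

Section ExtendedState.
Variables (R : realType) (m n : nat).
Local Notation N := (m + m + n * m)%N.
Local Notation qI a := (lshift (n * m) (lshift m a)).
Local Notation pI a := (lshift (n * m) (rshift m a)).
Local Notation cI k := (rshift (m + m) k).
Local Notation e i := (delta_mx 0 i : 'rV[R]_N).

Lemma ext_index_ind (P : 'I_N -> Prop) :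
  (forall a, P (qI a)) -> (forall a, P (pI a)) -> (forall k, P (cI k)) -> forall i, P i.
Proof.
move=> Pq Pp Pc i; case: (split_ordP i) => [i' -> | k ->] //.
by case: (split_ordP i') => [a -> | a ->].
Qed.

Lemma invariant_along_qof_p a : invariant_along (e (pI a)) (@qof R m n).
Proof.
by move=> x t; apply/matrixP => r c; rewrite !mxE eq_lshift eq_lrshift andbF mulr0 add0r.
Qed.

Lemma invariant_along_qof_chi k : invariant_along (e (cI k)) (@qof R m n).
Proof. by move=> x t; apply/matrixP => r c; rewrite !mxE eq_lrshift andbF mulr0 add0r. Qed.

Lemma invariant_along_pof_q a : invariant_along (e (qI a)) (@pof R m n).
Proof.
by move=> x t; apply/matrixP => r c; rewrite !mxE eq_lshift eq_rlshift andbF mulr0 add0r.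
Qed.

Lemma invariant_along_pof_chi k : invariant_along (e (cI k)) (@pof R m n).
Proof. by move=> x t; apply/matrixP => r c; rewrite !mxE eq_lrshift andbF mulr0 add0r. Qed.

Lemma invariant_along_chiof_qp i : invariant_along (e (lshift (n * m) i)) (@chiof R m n).
Proof. by move=> x t; apply/matrixP => r c; rewrite !mxE eq_rlshift andbF mulr0 add0r. Qed.

Lemma invariant_along_chiof_entry j k : j != k ->
  invariant_along (e (cI k)) (fun y : 'rV[R]_N => chiof y 0 j).
Proof. by move=> jk x t; rewrite !mxE eq_rshift (negbTE jk) andbF mulr0 add0r. Qed.

Lemma Jhat_q_row (H : 'M[R]_(m, n * m)) G a j : Jhat H G (qI a) j = (j == pI a)%:R.
Proof.
rewrite /Jhat; elim/ext_index_ind: j => [b | b | k].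
- by rewrite !block_mxEul mxE eq_lshift eq_lrshift.
- by rewrite block_mxEul block_mxEur mxE eq_lshift eq_rshift eq_sym.
- by rewrite block_mxEur col_mxEu mxE eq_rlshift.
Qed.

Lemma Jhat_pp (H : 'M[R]_(m, n * m)) G a b : Jhat H G (pI a) (pI b) = 0.
Proof. by rewrite /Jhat block_mxEul block_mxEdr mxE. Qed.

Lemma Jhat_trmx (H : 'M[R]_(m, n * m)) G : (Jhat H G)^T = - Jhat H (- G^T).
Proof.
rewrite /Jhat tr_block_mx tr_block_mx tr_col_mx tr_row_mx !trmx0 !raddfN /= trmx1 trmxK.
by rewrite !opp_block_mx opp_col_mx opp_row_mx !oppr0 !opprK.
Qed.

Lemma Sighat_mulmx_tr (D : 'M[R]_(n * m)) :
  Sighat D *m (Sighat D)^T = block_mx 0 0 0 (D *m D^T).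
Proof. by rewrite /Sighat tr_col_mx mul_col_row trmx0 !mul0mx mulmx0. Qed.

Lemma Sighat_mulmx_tr_lshift (D : 'M[R]_(n * m)) i b :
  (Sighat D *m (Sighat D)^T) i (lshift (n * m) b) = 0.
Proof.
by rewrite Sighat_mulmx_tr; case: (split_ordP i) => i' ->; rewrite ?block_mxEul ?block_mxEdl mxE.
Qed.

Section FreeEnergy.
Variables (beta : R) (U : 'rV[R]_m -> R) (mm : 'rV[R]_m -> 'M[R]_m).
Hypothesis dU : forall q, differentiable U q.
Hypothesis dmm : forall q, differentiable mm q.
Hypothesis det_mm_gt0 : forall q, 0 < \det (mm q).
Local Notation F := (@Fhat R m n beta U mm).
Implicit Types y : 'rV[R]_N.

Let kinetic y := \sum_k \sum_l (2^-1 * invmx (mm (qof y)) l k) * (pof y 0 l * pof y 0 k).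
Let Fqp y := U (qof y) + kinetic y + 2^-1 * beta^-1 * ln (\det (mm (qof y))).
Let Fchi y := \sum_j 2^-1 * (chiof y 0 j * chiof y 0 j).

Lemma Fhat_split : F = fun y => Fqp y + Fchi y.
Proof.
apply/funext => y; rewrite /Fhat /Fqp /kinetic /Fchi; congr (_ + _ + _ + _).
  rewrite !mxE mulr_sumr; apply: eq_bigr => k _.
  by rewrite !mxE big_distrl mulr_sumr; apply: eq_bigr => l _; rewrite !mxE /=; ring.
by rewrite !mxE mulr_sumr; apply: eq_bigr => j _; rewrite !mxE.
Qed.

Let dqof y : differentiable (@qof R m n) y.
Proof. by apply: differentiable_comp; apply: differentiable_lsubmx. Qed.

Let dpof y : differentiable (@pof R m n) y.
Proof. by apply: differentiable_comp; [apply: differentiable_lsubmx | apply: differentiable_rsubmx]. Qed.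

Let dchiof y : differentiable (@chiof R m n) y.
Proof. exact: differentiable_rsubmx. Qed.

Let dUq y : differentiable (fun y => U (qof y)) y.
Proof. exact: differentiable_comp (dqof y) (dU _). Qed.

Let dinvmq y l k : differentiable (fun y => invmx (mm (qof y)) l k) y.
Proof.
apply: differentiable_invmx_entry; last exact: differentiable_comp (dqof y) (dmm _).
by move=> z; rewrite unitmxE unitfE gt_eqF.
Qed.

Let dlndet y : differentiable (fun y => ln (\det (mm (qof y)))) y.
Proof.
apply: differentiable_comp.
  apply: differentiable_det => i j.
  exact/differentiable_mx_entry/(differentiable_comp (dqof y) (dmm _)).
by apply/derivable1_diffP; have [] := is_derive1_ln (det_mm_gt0 (qof y)).
Qed.

Let dpp y l k : differentiable (fun y => pof y 0 l * pof y 0 k) y.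
Proof. by apply: differentiableM; exact: differentiable_mx_entry (dpof y). Qed.

Let dchi2 y j : differentiable (fun y => 2^-1 * (chiof y 0 j * chiof y 0 j)) y.
Proof.
by apply/differentiableZ/differentiableM; exact: differentiable_mx_entry (dchiof y).
Qed.

Let dFqp y : differentiable Fqp y.
Proof.
apply: differentiableD; last exact/differentiableZ/dlndet.
apply: differentiableD (dUq y) _.
apply: differentiable_sumr => k _; apply: differentiable_sumr => l _.
by apply: differentiableM; [exact/differentiableZ/dinvmq | exact: dpp].
Qed.

Let dFchi y : differentiable Fchi y.
Proof. by apply: differentiable_sumr => j _; exact: dchi2. Qed.

Lemma differentiable_Fhat y : differentiable F y.
Proof. by rewrite Fhat_split; exact: differentiableD (dFqp y) (dFchi y). Qed.

Let Fqp_chi k : invariant_along (e (cI k)) Fqp.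
Proof. by move=> x t; rewrite /Fqp /kinetic invariant_along_qof_chi invariant_along_pof_chi. Qed.

Let Fchi_qp i : invariant_along (e (lshift (n * m) i)) Fchi.
Proof. by move=> x t; rewrite /Fchi invariant_along_chiof_qp. Qed.

Lemma partials_commute_Fhat_qp a b : partials_commute (e (qI a)) (e (pI b)) F.
Proof.
rewrite Fhat_split; apply: partials_commuteD; last first.
  apply: partials_commuteC; apply: (partials_commute_invariant (Fchi_qp _)) => y.
  exact/diff_derivable/dFchi.
apply: partials_commuteD; first apply: partials_commuteD.
- apply: partials_commute_invariant => [x t | y]; first by rewrite invariant_along_qof_p.
  exact/diff_derivable/dUq.
- apply: partials_commute_sum => k _; apply: partials_commute_sum => l _.
  apply: partials_commuteM => [x t | x t | y | y].
  + by rewrite invariant_along_qof_p.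
  + by rewrite invariant_along_pof_q.
  + exact/diff_derivable/differentiableZ/dinvmq.
  + exact/diff_derivable/dpp.
- apply: partials_commute_invariant => [x t | y]; first by rewrite invariant_along_qof_p.
  exact/diff_derivable/differentiableZ/dlndet.
Qed.

Lemma partials_commute_Fhat_qp_chi i k :
  partials_commute (e (lshift (n * m) i)) (e (cI k)) F.
Proof.
rewrite Fhat_split; apply: partials_commuteD.
  by apply: (partials_commute_invariant (Fqp_chi k)) => y; exact/diff_derivable/dFqp.
apply: partials_commuteC; apply: (partials_commute_invariant (Fchi_qp i)) => y.
exact/diff_derivable/dFchi.
Qed.

Lemma partials_commute_Fhat_chi k l : k != l -> partials_commute (e (cI k)) (e (cI l)) F.
Proof.
move=> kl; rewrite Fhat_split; apply: partials_commuteD.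
  by apply: (partials_commute_invariant (Fqp_chi l)) => y; exact/diff_derivable/dFqp.
apply: partials_commute_sum => j _; pose sq (x : R) := 2^-1 * (x * x).
have [-> | jk] := eqVneq j k.
  apply: partials_commute_invariant => [|y]; last exact/diff_derivable/dchi2.
  exact: (invariant_along_comp sq (invariant_along_chiof_entry kl)).
apply: partials_commuteC; apply: partials_commute_invariant => [|y].
  exact: (invariant_along_comp sq (invariant_along_chiof_entry jk)).
exact/diff_derivable/dchi2.
Qed.

Variable c : R.
Hypothesis beta_neq0 : beta != 0.
Local Notation rho := (@rho0 R m n c beta U mm).

Lemma rho0E : rho = fun y => c / Num.sqrt ((2 * pi) ^+ m) * expR (- beta * F y).
Proof.
apply/funext => y; rewrite /rho0 /Fhat /=.
set u := U _; set kin := (_ *m _ *m _) 0 0; set chi2 := (_ *m _) 0 0; set d := \det _.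
have sqrt_d : Num.sqrt d = expR (2^-1 * ln d).
  by have d_gt0 : 0 < d := det_mm_gt0 _; rewrite -powR12_sqrt ?ltW // /powR gt_eqF.
have -> : - beta * (u + 2^-1 * kin + 2^-1 * beta^-1 * ln d + 2^-1 * chi2) =
          - beta * (u + 2^-1 * kin + 2^-1 * chi2) - 2^-1 * ln d by field.
by rewrite expRD expRN -sqrt_d invfM; ring.
Qed.

Lemma derivable_rho0 y v : derivable rho y v.
Proof. by rewrite rho0E; exact/diff_derivable/differentiable_cexpR/differentiable_Fhat. Qed.

Lemma derive_rho0 y v : 'D_v rho y = - beta * rho y * 'D_v F y.
Proof. by rewrite rho0E derive_cexpR //; exact: differentiable_Fhat. Qed.

Lemma partials_commute_rho0 u v : partials_commute u v F -> partials_commute u v rho.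
Proof. by rewrite rho0E; apply: partials_commute_cexpR; exact: differentiable_Fhat. Qed.

Section FokkerPlanck.
Variables (H : 'rV[R]_m -> 'M[R]_(m, n * m)) (Gam D : 'rV[R]_m -> 'M[R]_(n * m)).
Hypothesis fluctuation_dissipation :
  forall q, D q *m (D q)^T = - beta^-1 *: (Gam q + (Gam q)^T).
Local Notation SS q := (Sighat (D q) *m (Sighat (D q))^T).

Definition flux_mx q : 'M[R]_N := beta^-1 *: Jhat (H q) (Gam q) + 2^-1 *: SS q.

Lemma flux_mx_entry q i j :
  flux_mx q i j = beta^-1 * Jhat (H q) (Gam q) i j + 2^-1 * SS q i j.
Proof. by rewrite !mxE. Qed.

Lemma flux_mxE q : flux_mx q = beta^-1 *: Jhat (H q) (2^-1 *: (Gam q - (Gam q)^T)).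
Proof.
rewrite /flux_mx Sighat_mulmx_tr fluctuation_dissipation /Jhat !scale_block_mx add_block_mx.
rewrite !scaler0 !addr0; congr block_mx.
by apply/matrixP => i j; rewrite !mxE /GRing.scale /=; move: beta^-1 => b; field.
Qed.

Lemma flux_mx_skew q i j : flux_mx q j i = - flux_mx q i j.
Proof.
have : - (2^-1 *: (Gam q - (Gam q)^T))^T = 2^-1 *: (Gam q - (Gam q)^T).
  by apply/matrixP => a b; rewrite !mxE; ring.
rewrite flux_mxE; move: (2^-1 *: _) => G GT.
have := congr1 (fun M : 'M[R]_N => M i j) (Jhat_trmx (H q) G).
by rewrite GT !mxE => ->; rewrite mulrN.
Qed.

Lemma flux_mx_diag q i : flux_mx q i i = 0.
Proof. by apply/eqP; move/eqP: (flux_mx_skew q i i); rewrite -addr_eq0 -mulr2n mulrn_eq0. Qed.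

Lemma flux_mx_q_row q a j : flux_mx q (qI a) j = beta^-1 * (j == pI a)%:R.
Proof. by rewrite flux_mxE mxE Jhat_q_row. Qed.

Lemma flux_mx_pp q a b : flux_mx q (pI a) (pI b) = 0.
Proof. by rewrite flux_mxE mxE Jhat_pp mulr0. Qed.

Lemma invariant_along_flux_mx i j :
  invariant_along (e i) (fun y => flux_mx (qof y) i j).
Proof.
elim/ext_index_ind: i => [a | a | k].
- by move=> x t; rewrite !flux_mx_q_row.
- exact: (invariant_along_comp (fun q => flux_mx q _ j) (invariant_along_qof_p a)).
- exact: (invariant_along_comp (fun q => flux_mx q _ j) (invariant_along_qof_chi k)).
Qed.

Lemma invariant_along_Sighat i j : invariant_along (e j) (fun y => SS (qof y) i j).
Proof.
elim/ext_index_ind: j => [a | a | k].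
- by move=> x t; rewrite !Sighat_mulmx_tr_lshift.
- by move=> x t; rewrite !Sighat_mulmx_tr_lshift.
- exact: (invariant_along_comp (fun q => SS q i _) (invariant_along_qof_chi k)).
Qed.

Lemma partials_commute_flux q i j : flux_mx q i j != 0 -> partials_commute (e j) (e i) F.
Proof.
elim/ext_index_ind: i => [a | a | k]; elim/ext_index_ind: j => [b | b | l].
- by rewrite flux_mx_q_row eq_lshift eq_lrshift mulr0 eqxx.
- by move=> _; apply/partials_commuteC/partials_commute_Fhat_qp.
- by rewrite flux_mx_q_row eq_rlshift mulr0 eqxx.
- by move=> _; apply: partials_commute_Fhat_qp.
- by rewrite flux_mx_pp eqxx.
- by move=> _; apply/partials_commuteC/(partials_commute_Fhat_qp_chi (rshift m a)).
- by rewrite flux_mx_skew flux_mx_q_row eq_rlshift mulr0 oppr0 eqxx.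
- by move=> _; apply: (partials_commute_Fhat_qp_chi (rshift m b)).
- have [-> | kl] := eqVneq k l; first by rewrite flux_mx_diag eqxx.
  by move=> _; apply: partials_commute_Fhat_chi; rewrite eq_sym.
Qed.

Lemma partials_commute_rho0_flux q i j :
  flux_mx q i j != 0 -> partials_commute (e j) (e i) rho.
Proof.
by move=> /partials_commute_flux; exact: partials_commute_rho0.
Qed.

Lemma drift_entry y i :
  drift beta U mm H Gam y i 0 = \sum_j Jhat (H (qof y)) (Gam (qof y)) i j * partial j F y.
Proof. by rewrite /drift mxE; apply: eq_bigr => j _; rewrite /grad [X in _ * X]mxE. Qed.

Lemma FP_flux i :
  (fun y => - drift beta U mm H Gam y i 0 * rho y
            + 2^-1 * \sum_j partial j (fun y' => SS (qof y') i j * rho y') y) =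
  (fun y => \sum_j flux_mx (qof y) i j * partial j rho y).
Proof.
apply/funext => y.
have SSrho j : partial j (fun y' => SS (qof y') i j * rho y') y = SS (qof y) i j * partial j rho y.
  have drho : derivable rho y (e j) by exact: derivable_rho0.
  exact: (deriveMl_invariant_along (invariant_along_Sighat i j) (fun=> drho)).2.
rewrite drift_entry (eq_bigr _ (fun j _ => SSrho j)) mulNr mulr_suml mulr_sumr -sumrN -big_split.
apply: eq_bigr => j _.
by rewrite /= flux_mx_entry /partial !derive_rho0; field.
Qed.

Lemma FP_rhs_flux z :
  FP_rhs beta U mm H Gam D rho z =
  \sum_i \sum_j flux_mx (qof z) i j * partial i (partial j rho) z.
Proof.
apply: eq_bigr => i _; rewrite FP_flux.
have dflux j : derivable (fun y => flux_mx (qof y) i j * partial j rho y) z (e i) /\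
    partial i (fun y => flux_mx (qof y) i j * partial j rho y) z =
    flux_mx (qof z) i j * partial i (partial j rho) z.
  apply: (deriveMl_invariant_along (invariant_along_flux_mx i j)).
  by move=> /partials_commute_rho0_flux /(_ z) [_ _ dji _ _]; exact: dji.
rewrite /partial -fct_sumE derive_sum => [|j]; last exact: (dflux j).1.
by apply: eq_bigr => j _; exact: (dflux j).2.
Qed.

Lemma FP_rhs_rho0_eq0 z : FP_rhs beta U mm H Gam D rho z = 0.
Proof.
rewrite FP_rhs_flux; apply: sum_skew_sym_eq0 => i j; first exact: flux_mx_skew.
by move=> /partials_commute_rho0_flux /(_ z) [_ _ _ _ Eji]; exact: Eji.
Qed.

End FokkerPlanck.

End FreeEnergy.

End ExtendedState.

Theorem proposition2 (R : realType) (m n : nat) (hm : (0 < m)%N) (hn : (0 < n)%N)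
    (beta : R) (hbeta : 0 < beta)
    (U : 'rV[R]_m -> R) (mm : 'rV[R]_m -> 'M[R]_m)
    (H : 'rV[R]_m -> 'M[R]_(m, n * m)) (Gam D : 'rV[R]_m -> 'M[R]_(n * m))
    (sU : smooth U) (smm : smooth mm) (sH : smooth H)
    (sGam : smooth Gam) (sD : smooth D)
    (mspd : forall q, spd (mm q))
    (hFD : forall q, D q *m (D q)^T = - beta^-1 *: (Gam q + (Gam q)^T))
    (c : R) :
  forall z : 'rV[R]_(m + m + n * m),
    FP_rhs beta U mm H Gam D (@rho0 R m n c beta U mm) z = 0.
Proof.
have dU q : differentiable U q := sU [::] q.
have dmm q : differentiable mm q := smm [::] q.
have det_mm_gt0 q : 0 < \det (mm q) := posdef_det_gt0 (mspd q).2.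
exact (FP_rhs_rho0_eq0 dU dmm det_mm_gt0 c (lt0r_neq0 hbeta) H hFD).
Qed.
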